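(* Fix $p\ge 3$ and let $\lambda=\lambda_p=2\cos(\pi/p)$. Suppose that $\alpha$ and $\beta$ are hyperbolic fixed points of $G_p$ with associated hyperbolic $\lambda$-BQFs $Q_\alpha$ and $Q_\beta$, and let $V\in G_p$. Then $Q_\beta=Q_\alpha\circ V$ if and only if $\beta=V^{-1}\alpha$.
   Context: Let $S=\begin{pmatrix}1&\lambda\\0&1\end{pmatrix}$, $T=\begin{pmatrix}0&-1\\1&0\end{pmatrix}$, and $G_p=\langle S,T\rangle/\{\pm I\}$ (the Hecke group), acting on $\mathbb{C}\cup\{\infty\}$ by linear fractional transformations $z\mapsto\frac{az+b}{cz+d}$. An element $\begin{pmatrix}a&b\\c&d\end{pmatrix}$ is hyperbolic if $|a+d|>2$; a hyperbolic fixed point is a real number fixed by a hyperbolic element of $G_p$. A $\lambda$-BQF is a binary quadratic form $Q(x,y)=Ax^2+Bxy+Cy^2$, written $[A,B,C]$, with $A,B,C\in\mathbb{Z}[\lambda]$; its discriminant is $D=B^2-4AC$. For $M=\begin{pmatrix}a&b\\c&d\end{pmatrix}\in G_p$, $(Q\circ M)(x,y)=Q(ax+by,cx+dy)$. For a hyperbolic fixed point $\alpha$, choose a matrix $\begin{pmatrix}a&b\\c&d\end{pmatrix}$ representing a generator of the (cyclic) stabilizer of $\alpha$ in $G_p$, replaced by its inverse if necessary so that $\alpha=\frac{a-d+\sqrt{D}}{2c}$ where $D=(a+d)^2-4$ and $\sqrt{D}>0$; then $Q_\alpha=[c,d-a,-b]$ (this is independent of the choices). Such forms are called hyperbolic $\lambda$-BQFs.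 *)

From Stdlib Require Import Reals ZArith.
Open Scope R_scope.

(* 2x2 real matrices [[a, b], [c, d]] *)
Record mat2 := M2 { ma : R; mb : R; mc : R; md : R }.

Definition mmul (M N : mat2) : mat2 :=
  M2 (ma M * ma N + mb M * mc N) (ma M * mb N + mb M * md N)
     (mc M * ma N + md M * mc N) (mc M * mb N + md M * md N).

Definition mid : mat2 := M2 1 0 0 1.
Definition mneg (M : mat2) : mat2 := M2 (- ma M) (- mb M) (- mc M) (- md M).
(* inverse of a determinant-one matrix (all elements of G_p have det 1) *)
Definition minv (M : mat2) : mat2 := M2 (md M) (- mb M) (- mc M) (ma M).

Definition Smat (lam : R) : mat2 := M2 1 lam 0 1.
Definition Tmat : mat2 := M2 0 (-1) 1 0.

Definition lambda_p (p : nat) : R := 2 * cos (PI / INR p).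

(* The matrix group <S, T> generated by S and T (words in S, S^-1, T, T^-1).
   G_p is its quotient by {+-I}; we work with representative matrices. *)
Inductive in_Gp (lam : R) : mat2 -> Prop :=
  | Gp_id : in_Gp lam mid
  | Gp_S : forall M, in_Gp lam M -> in_Gp lam (mmul (Smat lam) M)
  | Gp_Sinv : forall M, in_Gp lam M -> in_Gp lam (mmul (minv (Smat lam)) M)
  | Gp_T : forall M, in_Gp lam M -> in_Gp lam (mmul Tmat M)
  | Gp_Tinv : forall M, in_Gp lam M -> in_Gp lam (mmul (minv Tmat) M).

Fixpoint mpow (M : mat2) (n : nat) : mat2 :=
  match n with O => mid | S k => mmul M (mpow M k) end.
Definition mzpow (M : mat2) (z : Z) : mat2 :=
  match z with
  | Z0 => mid
  | Zpos q => mpow M (Pos.to_nat q)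
  | Zneg q => mpow (minv M) (Pos.to_nat q)
  end.

(* Action by linear fractional transformations on real points:
   [mob_eq M x y] means  M x = y  in C u {oo}, for real finite x, y,
   i.e. c x + d <> 0 and y = (a x + b)/(c x + d). *)
Definition mob_eq (M : mat2) (x y : R) : Prop :=
  mc M * x + md M <> 0 /\ y = (ma M * x + mb M) / (mc M * x + md M).

Definition hyperbolic (M : mat2) : Prop := Rabs (ma M + md M) > 2.

Definition hyp_fixed_point (lam alpha : R) : Prop :=
  exists M, in_Gp lam M /\ hyperbolic M /\ mob_eq M alpha alpha.

(* M represents a generator of the stabilizer of alpha in G_p = <S,T>/{+-I} *)
Definition stab_generator (lam alpha : R) (M : mat2) : Prop :=
  in_Gp lam M /\ mob_eq M alpha alpha /\
  forall g, in_Gp lam g -> mob_eq g alpha alpha ->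
    exists n : Z, g = mzpow M n \/ g = mneg (mzpow M n).

(* binary quadratic forms [A, B, C] = A x^2 + B x y + C y^2 *)
Record bqf := BQF { qA : R; qB : R; qC : R }.

(* (Q o M)(x, y) = Q (a x + b y, c x + d y), coefficients written out *)
Definition bqf_comp (Q : bqf) (M : mat2) : bqf :=
  let a := ma M in let b := mb M in let c := mc M in let d := md M in
  BQF (qA Q * a * a + qB Q * a * c + qC Q * c * c)
      (2 * qA Q * a * b + qB Q * (a * d + b * c) + 2 * qC Q * c * d)
      (qA Q * b * b + qB Q * b * d + qC Q * d * d).

Definition is_Q_of (lam alpha : R) (Q : bqf) : Prop :=
  exists M : mat2,
    stab_generator lam alpha M /\ hyperbolic M /\ mc M <> 0 /\
    alpha = (ma M - md M + sqrt ((ma M + md M) ^ 2 - 4)) / (2 * mc M) /\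
    Q = BQF (mc M) (md M - ma M) (- mb M).

From Stdlib Require Import Reals ZArith Lra Lia Psatz.
Open Scope R_scope.

(* A form Q = [A, B, C] with A <> 0 and discriminant D > 0 vanishes at the two
   points x = (-B +- sqrt D) / (2A), distinguished by the sign of 2Ax + B = +- sqrt D.
   Q_alpha is the form attached to a generator of the stabilizer of alpha that has
   alpha as its "principal" root, the one with 2A alpha + B = + sqrt D.  For V of
   determinant one, Q o V has principal root V^-1 alpha; since principal roots are
   unique, Q_beta = Q_alpha o V forces beta = V^-1 alpha.
   Conversely, if beta = V^-1 alpha then V^-1 M_alpha V fixes beta and V M_beta V^-1
   fixes alpha, so each is +- an integer power of the other generator.  Along the
   powers of a hyperbolic matrix |trace| grows strictly, and conjugation preserves
   the trace, so V^-1 M_alpha V = +- M_beta^(+-1), i.e. Q_alpha o V = +- Q_beta.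
   The sign is + because Q_alpha o V has principal root beta, whereas - Q_beta
   does not. *)

Definition mdet (M : mat2) : R := ma M * md M - mb M * mc M.
Definition mtrace (M : mat2) : R := ma M + md M.

Lemma mmul_assoc A B C : mmul (mmul A B) C = mmul A (mmul B C).
Proof. destruct A, B, C; unfold mmul; simpl; f_equal; ring. Qed.

Lemma mmul_1l A : mmul mid A = A.
Proof. destruct A; unfold mmul, mid; simpl; f_equal; ring. Qed.

Lemma mmul_1r A : mmul A mid = A.
Proof. destruct A; unfold mmul, mid; simpl; f_equal; ring. Qed.

Lemma minv_mmul A B : minv (mmul A B) = mmul (minv B) (minv A).
Proof. destruct A, B; unfold mmul, minv; simpl; f_equal; ring. Qed.

Lemma minv_involutive A : minv (minv A) = A.
Proof. destruct A; unfold minv; simpl; f_equal; ring. Qed.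

Lemma minv_mid : minv mid = mid.
Proof. unfold minv, mid; simpl; f_equal; ring. Qed.

Lemma mdet_mmul A B : mdet (mmul A B) = mdet A * mdet B.
Proof. destruct A, B; unfold mdet, mmul; simpl; ring. Qed.

Lemma mdet_minv A : mdet (minv A) = mdet A.
Proof. destruct A; unfold mdet, minv; simpl; ring. Qed.

Lemma mtrace_minv A : mtrace (minv A) = mtrace A.
Proof. destruct A; unfold mtrace, minv; simpl; ring. Qed.

Lemma mtrace_mneg A : mtrace (mneg A) = - mtrace A.
Proof. destruct A; unfold mtrace, mneg; simpl; ring. Qed.

Lemma mtrace_conj M V : mdet V = 1 -> mtrace (mmul (minv V) (mmul M V)) = mtrace M.
Proof.
  destruct M as [a b c d], V as [a' b' c' d']; unfold mdet, mtrace, mmul, minv; simpl.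
  intro Hdet.
  transitivity ((a + d) * (a' * d' - b' * c')); [ring | rewrite Hdet; ring].
Qed.

Lemma in_Gp_mmul lam M N : in_Gp lam M -> in_Gp lam N -> in_Gp lam (mmul M N).
Proof.
  induction 1; intro HN; rewrite ?mmul_assoc.
  - rewrite mmul_1l; exact HN.
  - apply Gp_S; auto.
  - apply Gp_Sinv; auto.
  - apply Gp_T; auto.
  - apply Gp_Tinv; auto.
Qed.

Lemma in_Gp_minv lam M : in_Gp lam M -> in_Gp lam (minv M).
Proof.
  induction 1; rewrite ?minv_mmul, ?minv_mid; [constructor | ..];
    apply in_Gp_mmul; auto.
  - rewrite <- mmul_1r; apply Gp_Sinv, Gp_id.
  - rewrite minv_involutive, <- mmul_1r; apply Gp_S, Gp_id.
  - rewrite <- mmul_1r; apply Gp_Tinv, Gp_id.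
  - rewrite minv_involutive, <- mmul_1r; apply Gp_T, Gp_id.
Qed.

Lemma in_Gp_conj lam M V :
  in_Gp lam M -> in_Gp lam V -> in_Gp lam (mmul (minv V) (mmul M V)).
Proof. intros HM HV; apply in_Gp_mmul; [apply in_Gp_minv | apply in_Gp_mmul]; auto. Qed.

Lemma in_Gp_mdet lam M : in_Gp lam M -> mdet M = 1.
Proof.
  induction 1; rewrite ?mdet_mmul, ?mdet_minv, ?IHin_Gp;
    unfold mdet, mid, Smat, Tmat; simpl; ring.
Qed.

Lemma mob_eq_mmul M N x y z : mob_eq N x y -> mob_eq M y z -> mob_eq (mmul M N) x z.
Proof.
  destruct N as [a b c d], M as [a' b' c' d']; unfold mob_eq, mmul; simpl.
  intros [Hu ->] [Hv ->].
  assert (E : (c' * a + d' * c) * x + (c' * b + d' * d) =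
              (c * x + d) * (c' * ((a * x + b) / (c * x + d)) + d')) by (field; auto).
  split.
  - rewrite E. apply Rmult_integral_contrapositive; auto.
  - rewrite E. field. split; auto.
    replace (c' * (a * x + b) + d' * (c * x + d)) with
      ((c * x + d) * (c' * ((a * x + b) / (c * x + d)) + d')) by (field; auto).
    apply Rmult_integral_contrapositive; auto.
Qed.

Lemma mob_eq_minv V x y : mdet V = 1 -> mob_eq (minv V) x y -> mob_eq V y x.
Proof.
  destruct V as [a b c d]; unfold mdet, mob_eq, minv; simpl.
  intros Hdet [Hu ->].
  assert (E : c * ((d * x + - b) / (- c * x + a)) + d = 1 / (- c * x + a)).
  { field_simplify; auto. replace (- c * b + d * a) with 1 by lra. reflexivity. }
  assert (E2 : a * ((d * x + - b) / (- c * x + a)) + b = x / (- c * x + a)).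
  { transitivity ((a * d - b * c) * x / (- c * x + a)); [field; auto |].
    rewrite Hdet; field; auto. }
  split.
  - rewrite E. apply Rmult_integral_contrapositive; split; [lra |].
    apply Rinv_neq_0_compat; auto.
  - rewrite E, E2. field. auto.
Qed.

Lemma mob_eq_conj M V x y : mdet V = 1 -> mob_eq (minv V) x y -> mob_eq M x x ->
  mob_eq (mmul (minv V) (mmul M V)) y y.
Proof.
  intros Hdet Hxy Hx.
  apply mob_eq_mmul with x; [apply mob_eq_mmul with x |]; auto using mob_eq_minv.
Qed.

Lemma mtrace_mpow_SS M k : mdet M = 1 ->
  mtrace (mpow M (S (S k))) = mtrace M * mtrace (mpow M (S k)) - mtrace (mpow M k).
Proof.
  simpl; generalize (mpow M k); intro N.
  destruct M as [a b c d], N as [a' b' c' d']; unfold mdet, mtrace, mmul; simpl.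
  intro Hdet.
  transitivity ((a + d) * ((a * a' + b * c') + (c * b' + d * d'))
                - (a * d - b * c) * (a' + d')); [ring | rewrite Hdet; ring].
Qed.

Lemma Rabs_mtrace_mpow_lt_S M k : mdet M = 1 -> 2 < Rabs (mtrace M) ->
  Rabs (mtrace (mpow M k)) < Rabs (mtrace (mpow M (S k))).
Proof.
  intros Hdet Htr. induction k as [| k IH].
  - simpl. rewrite mmul_1r.
    replace (mtrace mid) with 2 by (unfold mtrace, mid; simpl; ring).
    rewrite Rabs_pos_eq by lra. exact Htr.
  - rewrite mtrace_mpow_SS by exact Hdet.
    set (u := mtrace (mpow M (S k))) in *; set (v := mtrace (mpow M k)) in *.
    (* |t u - v| >= |t| |u| - |v| > 2 |u| - |u| = |u| *)
    assert (Htri : Rabs (mtrace M * u) <= Rabs (mtrace M * u - v) + Rabs v).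
    { replace (mtrace M * u) with ((mtrace M * u - v) + v) at 1 by ring.
      apply Rabs_triang. }
    rewrite Rabs_mult in Htri.
    pose proof (Rabs_pos v). nra.
Qed.

Lemma Rabs_mtrace_lt_mpow M k : mdet M = 1 -> 2 < Rabs (mtrace M) -> (2 <= k)%nat ->
  Rabs (mtrace M) < Rabs (mtrace (mpow M k)).
Proof.
  intros Hdet Htr Hk. induction Hk as [| k Hk IH].
  - pose proof (Rabs_mtrace_mpow_lt_S M 1 Hdet Htr) as H.
    simpl in H |- *. rewrite mmul_1r in *. exact H.
  - pose proof (Rabs_mtrace_mpow_lt_S M k Hdet Htr). lra.
Qed.

Lemma Rabs_mtrace_lt_mzpow M n : mdet M = 1 -> 2 < Rabs (mtrace M) -> (1 < Z.abs n)%Z ->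
  Rabs (mtrace M) < Rabs (mtrace (mzpow M n)).
Proof.
  intros Hdet Htr Hn. destruct n as [| q | q]; simpl in Hn |- *; [lia | |].
  - apply Rabs_mtrace_lt_mpow; auto. lia.
  - rewrite <- mtrace_minv. apply Rabs_mtrace_lt_mpow.
    + rewrite mdet_minv; exact Hdet.
    + rewrite mtrace_minv; exact Htr.
    + lia.
Qed.

Lemma mzpow_unit M n : Z.abs n = 1%Z -> mzpow M n = M \/ mzpow M n = minv M.
Proof.
  intro Hn. destruct n as [| [q | q |] | [q | q |]]; simpl in Hn |- *;
    try discriminate; rewrite mmul_1r; auto.
Qed.

Lemma Rabs_mtrace_le_mzpow M n : mdet M = 1 -> 2 < Rabs (mtrace M) -> n <> 0%Z ->
  Rabs (mtrace M) <= Rabs (mtrace (mzpow M n)).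
Proof.
  intros Hdet Htr Hn.
  destruct (Z.eq_dec (Z.abs n) 1) as [Hunit | Hbig].
  - destruct (mzpow_unit M n Hunit) as [-> | ->]; rewrite ?mtrace_minv; lra.
  - apply Rlt_le, Rabs_mtrace_lt_mzpow; auto. lia.
Qed.

Lemma stab_generator_conj_unit_pow lam alpha beta Ma Mb V :
  stab_generator lam alpha Ma -> stab_generator lam beta Mb ->
  hyperbolic Ma -> hyperbolic Mb -> in_Gp lam V -> mob_eq (minv V) alpha beta ->
  exists n, Z.abs n = 1%Z /\
    (mmul (minv V) (mmul Ma V) = mzpow Mb n \/
     mmul (minv V) (mmul Ma V) = mneg (mzpow Mb n)).
Proof.
  intros [HinA [HfixA HgenA]] [HinB [HfixB HgenB]] HhA HhB HV Hab.
  unfold hyperbolic in HhA, HhB; fold (mtrace Ma) in HhA; fold (mtrace Mb) in HhB.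
  assert (HdV : mdet V = 1) by exact (in_Gp_mdet _ _ HV).
  assert (HdA : mdet Ma = 1) by exact (in_Gp_mdet _ _ HinA).
  assert (HdB : mdet Mb = 1) by exact (in_Gp_mdet _ _ HinB).
  set (N := mmul (minv V) (mmul Ma V)).
  set (N' := mmul (minv (minv V)) (mmul Mb (minv V))).
  assert (HdV' : mdet (minv V) = 1) by (rewrite mdet_minv; exact HdV).
  assert (Hba : mob_eq (minv (minv V)) beta alpha)
    by (rewrite minv_involutive; exact (mob_eq_minv V alpha beta HdV Hab)).
  destruct (HgenB N (in_Gp_conj _ _ _ HinA HV) (mob_eq_conj Ma V _ _ HdV Hab HfixA))
    as [n Hn].
  destruct (HgenA N' (in_Gp_conj _ _ _ HinB (in_Gp_minv _ _ HV))
                     (mob_eq_conj Mb (minv V) _ _ HdV' Hba HfixB)) as [m Hm].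
  assert (HtrN : Rabs (mtrace Ma) = Rabs (mtrace (mzpow Mb n))).
  { rewrite <- (mtrace_conj Ma V HdV); fold N.
    destruct Hn as [-> | ->]; rewrite ?mtrace_mneg, ?Rabs_Ropp; reflexivity. }
  assert (HtrN' : Rabs (mtrace Mb) = Rabs (mtrace (mzpow Ma m))).
  { rewrite <- (mtrace_conj Mb (minv V) HdV'); fold N'.
    destruct Hm as [-> | ->]; rewrite ?mtrace_mneg, ?Rabs_Ropp; reflexivity. }
  assert (Hmid : Rabs (mtrace mid) = 2)
    by (unfold mtrace, mid; simpl; rewrite Rabs_pos_eq; lra).
  assert (Hn0 : n <> 0%Z) by (intros ->; simpl in HtrN; lra).
  assert (Hm0 : m <> 0%Z) by (intros ->; simpl in HtrN'; lra).
  exists n; split; [| exact Hn].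
  destruct (Z.eq_dec (Z.abs n) 1) as [Hunit | Hbig]; [exact Hunit | exfalso].
  pose proof (Rabs_mtrace_le_mzpow Ma m HdA HhA Hm0).
  pose proof (Rabs_mtrace_lt_mzpow Mb n HdB HhB ltac:(lia)).
  lra.
Qed.

Definition form_of (M : mat2) : bqf := BQF (mc M) (md M - ma M) (- mb M).
Definition bqf_opp (Q : bqf) : bqf := BQF (- qA Q) (- qB Q) (- qC Q).
Definition bqf_disc (Q : bqf) : R := qB Q ^ 2 - 4 * qA Q * qC Q.
Definition bqf_eval (Q : bqf) (x : R) : R := qA Q * x ^ 2 + qB Q * x + qC Q.
Definition bqf_slope (Q : bqf) (x : R) : R := 2 * qA Q * x + qB Q.

(* At a root x of Q, bqf_slope Q x = +- sqrt (bqf_disc Q); the principal root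
   (-B + sqrt D) / (2A) is the one with the + sign. *)
Definition principal_root (Q : bqf) (x : R) : Prop :=
  bqf_eval Q x = 0 /\ bqf_slope Q x = sqrt (bqf_disc Q).

Lemma form_of_conj M V : bqf_comp (form_of M) V = form_of (mmul (minv V) (mmul M V)).
Proof. destruct M, V; unfold bqf_comp, form_of, mmul, minv; simpl; f_equal; ring. Qed.

Lemma form_of_mneg M : form_of (mneg M) = bqf_opp (form_of M).
Proof. destruct M; unfold form_of, bqf_opp; simpl; f_equal; ring. Qed.

Lemma form_of_minv M : form_of (minv M) = bqf_opp (form_of M).
Proof. destruct M; unfold form_of, bqf_opp; simpl; f_equal; ring. Qed.

Lemma bqf_opp_involutive Q : bqf_opp (bqf_opp Q) = Q.
Proof. destruct Q; unfold bqf_opp; simpl; f_equal; ring. Qed.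

Lemma bqf_disc_comp Q V : bqf_disc (bqf_comp Q V) = mdet V ^ 2 * bqf_disc Q.
Proof. destruct Q, V; unfold bqf_disc, bqf_comp, mdet; simpl; ring. Qed.

Lemma bqf_disc_opp Q : bqf_disc (bqf_opp Q) = bqf_disc Q.
Proof. destruct Q; unfold bqf_disc, bqf_opp; simpl; ring. Qed.

Lemma bqf_disc_form_of M : bqf_disc (form_of M) = mtrace M ^ 2 - 4 * mdet M.
Proof. destruct M; unfold bqf_disc, form_of, mtrace, mdet; simpl; ring. Qed.

Lemma bqf_disc_form_of_pos M : mdet M = 1 -> hyperbolic M -> 0 < bqf_disc (form_of M).
Proof.
  unfold hyperbolic; fold (mtrace M); intros Hdet Htr.
  rewrite bqf_disc_form_of, Hdet, <- (pow2_abs (mtrace M)). nra.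
Qed.

Lemma form_of_principal_root M alpha : mdet M = 1 -> hyperbolic M -> mc M <> 0 ->
  alpha = (ma M - md M + sqrt ((ma M + md M) ^ 2 - 4)) / (2 * mc M) ->
  principal_root (form_of M) alpha.
Proof.
  intros Hdet Hhyp Hc Halpha.
  assert (HD : bqf_disc (form_of M) = (ma M + md M) ^ 2 - 4)
    by (rewrite bqf_disc_form_of, Hdet; unfold mtrace; ring).
  pose proof (bqf_disc_form_of_pos M Hdet Hhyp) as Hpos; rewrite HD in Hpos.
  assert (Hslope : bqf_slope (form_of M) alpha = sqrt (bqf_disc (form_of M)))
    by (rewrite HD; unfold bqf_slope, form_of; cbn [qA qB]; rewrite Halpha; field; auto).
  split; [| exact Hslope].
  apply Rmult_eq_reg_l with (4 * mc M); [| lra].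
  transitivity (bqf_slope (form_of M) alpha ^ 2 - bqf_disc (form_of M)).
  - unfold bqf_eval, bqf_slope, bqf_disc, form_of; simpl; ring.
  - rewrite Hslope, pow2_sqrt; [ring | lra].
Qed.

Lemma principal_root_unique Q y z : qA Q <> 0 ->
  principal_root Q y -> principal_root Q z -> y = z.
Proof.
  unfold principal_root, bqf_slope; intros HA [_ Hy] [_ Hz].
  apply Rmult_eq_reg_l with (2 * qA Q); lra.
Qed.

Lemma principal_root_opp Q x : 0 < bqf_disc Q ->
  principal_root Q x -> ~ principal_root (bqf_opp Q) x.
Proof.
  unfold principal_root, bqf_slope; rewrite bqf_disc_opp.
  intros HD [_ Hx] [_ Hopp]; simpl in Hopp.
  pose proof (sqrt_lt_R0 _ HD). lra.
Qed.

Lemma principal_root_comp Q V x y : mdet V = 1 -> mob_eq (minv V) x y ->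
  principal_root Q x -> principal_root (bqf_comp Q V) y.
Proof.
  intros Hdet Hxy [Hroot Hslope].
  unfold principal_root; rewrite bqf_disc_comp, Hdet, pow1, Rmult_1_l, <- Hslope.
  destruct Q as [A B C], V as [a b c d];
    unfold mdet, mob_eq, bqf_eval, bqf_slope, bqf_comp in *;
    cbn [ma mb mc md minv qA qB qC] in *.
  destruct Hxy as [Hu ->].
  (* with u = a - c x one has a y + b = x / u and c y + d = 1 / u *)
  replace C with (- A * x ^ 2 - B * x) by lra.
  split.
  - field; auto.
  - transitivity ((a * d - b * c) * (2 * A * x + B)); [field; auto | rewrite Hdet; ring].
Qed.

Lemma mob_eq_of_principal_root_comp Q V x y : mdet V = 1 -> qA (bqf_comp Q V) <> 0 ->
  principal_root Q x -> principal_root (bqf_comp Q V) y -> mob_eq (minv V) x y.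
Proof.
  intros Hdet HA Hx Hy.
  assert (Hu : mc (minv V) * x + md (minv V) <> 0).
  { (* if a = c x then the leading coefficient Q(a, c) of Q o V is c^2 Q(x, 1) = 0 *)
    destruct Hx as [Hroot _]. revert HA Hroot.
    destruct Q as [A B C], V as [a b c d]; unfold bqf_comp, bqf_eval, minv;
      cbn [qA qB qC ma mb mc md].
    intros HA Hroot Hu. apply HA.
    replace a with (c * x) by lra.
    transitivity (c ^ 2 * (A * x ^ 2 + B * x + C)); [ring | rewrite Hroot; ring]. }
  set (z := (ma (minv V) * x + mb (minv V)) / (mc (minv V) * x + md (minv V))).
  assert (Hz : mob_eq (minv V) x z) by (split; auto).
  replace y with z; [exact Hz |].
  exact (principal_root_unique _ z y HA (principal_root_comp Q V x z Hdet Hz Hx) Hy).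
Qed.

Lemma form_of_comp_stab_generator lam alpha beta Ma Mb V :
  stab_generator lam alpha Ma -> stab_generator lam beta Mb ->
  hyperbolic Ma -> hyperbolic Mb -> in_Gp lam V -> mob_eq (minv V) alpha beta ->
  bqf_comp (form_of Ma) V = form_of Mb \/
  bqf_comp (form_of Ma) V = bqf_opp (form_of Mb).
Proof.
  intros HgA HgB HhA HhB HV Hab.
  destruct (stab_generator_conj_unit_pow lam alpha beta Ma Mb V HgA HgB HhA HhB HV Hab)
    as [n [Hn HN]].
  rewrite form_of_conj.
  destruct (mzpow_unit Mb n Hn) as [Hpow | Hpow]; rewrite Hpow in HN;
    destruct HN as [-> | ->];
    rewrite ?form_of_mneg, ?form_of_minv, ?bqf_opp_involutive; auto.
Qed.

Theorem lemma3p2 (p : nat) (Hp : (3 <= p)%nat) (alpha beta : R)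
  (Ha : hyp_fixed_point (lambda_p p) alpha)
  (Hb : hyp_fixed_point (lambda_p p) beta)
  (Qa Qb : bqf)
  (HQa : is_Q_of (lambda_p p) alpha Qa)
  (HQb : is_Q_of (lambda_p p) beta Qb)
  (V : mat2) (HV : in_Gp (lambda_p p) V) :
  Qb = bqf_comp Qa V <-> mob_eq (minv V) alpha beta.
Proof.
  destruct HQa as [Ma [HgA [HhA [HcA [Halpha ->]]]]].
  destruct HQb as [Mb [HgB [HhB [HcB [Hbeta ->]]]]].
  fold (form_of Ma) (form_of Mb).
  assert (HdV : mdet V = 1) by exact (in_Gp_mdet _ _ HV).
  assert (HdA : mdet Ma = 1) by exact (in_Gp_mdet _ _ (proj1 HgA)).
  assert (HdB : mdet Mb = 1) by exact (in_Gp_mdet _ _ (proj1 HgB)).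
  pose proof (form_of_principal_root Ma alpha HdA HhA HcA Halpha) as HrA.
  pose proof (form_of_principal_root Mb beta HdB HhB HcB Hbeta) as HrB.
  split.
  - intro Hcomp.
    assert (HA : qA (bqf_comp (form_of Ma) V) <> 0) by (rewrite <- Hcomp; exact HcB).
    rewrite Hcomp in HrB.
    exact (mob_eq_of_principal_root_comp _ _ _ _ HdV HA HrA HrB).
  - intro Hab.
    pose proof (principal_root_comp _ _ _ _ HdV Hab HrA) as Hr.
    destruct (form_of_comp_stab_generator _ _ _ _ _ _ HgA HgB HhA HhB HV Hab)
      as [Hcomp | Hcomp]; [auto | exfalso].
    rewrite Hcomp in Hr.
    exact (principal_root_opp _ _ (bqf_disc_form_of_pos Mb HdB HhB) HrB Hr).
Qed.
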